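(* For every connected graph $G$ with no isolated vertices, $$\gamma_t(G) \le \left\lceil \frac{2(\gamma(G)+\gamma_c(G))}{3}\right\rceil.$$ Moreover, this bound is tight.
   Context: All graphs are finite, simple and undirected. A set $S\subseteq V(G)$ is a dominating set if every vertex not in $S$ is adjacent to some vertex of $S$; $\gamma(G)$ is the minimum size of a dominating set. A set $S$ is a total dominating set if every vertex of $G$ (including those in $S$) is adjacent to some vertex of $S$; $\gamma_t(G)$ is the minimum size of a total dominating set. A set $S$ is a connected dominating set if it is dominating and the subgraph induced by $S$ is connected; $\gamma_c(G)$ is the minimum size of a connected dominating set. *)

From mathcomp Require Import all_boot.
Set Implicit Arguments. Unset Strict Implicit. Unset Printing Implicit Defensive.

Section Domination.
Variable T : finType.
Variable e : rel T.

Definition simple_graph : Prop := symmetric e /\ irreflexive e.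

Definition connected_graph : Prop :=
  0 < #|T| /\ forall x y : T, connect e x y.

Definition no_isolated : Prop := forall x : T, exists y : T, e x y.

Definition dominating (S : {set T}) : bool :=
  [forall x, (x \in S) || [exists y in S, e y x]].

Definition total_dominating (S : {set T}) : bool :=
  [forall x, [exists y in S, e y x]].

Definition induced_connected (S : {set T}) : bool :=
  [forall x in S, forall y in S,
     connect [rel u v | [&& e u v, u \in S & v \in S]] x y].

Definition connected_dominating (S : {set T}) : bool :=
  dominating S && induced_connected S.

(* minimum cardinality of a set satisfying P; the default #|T| is only used
   when no such set exists, which never happens under the hypotheses of the
   theorem (setT is a dominating / total dominating / connected dominating set
   of a connected graph without isolated vertices). *)
Definition min_card (P : pred {set T}) : nat :=
  \big[minn/#|T|]_(S : {set T} | P S) #|S|.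

Definition gamma : nat := min_card dominating.
Definition gamma_t : nat := min_card total_dominating.
Definition gamma_c : nat := min_card connected_dominating.

End Domination.

Definition ceil_div (a b : nat) : nat := (a + b.-1) %/ b.

(* Any dominating set D becomes a total dominating set after adding one
   neighbour of each of its vertices, so gamma_t <= 2 gamma; a connected
   dominating set with at least two vertices is already total dominating, so
   gamma_t <= gamma_c once gamma_c >= 2; and gamma <= gamma_c.  Hence
   gamma_t <= min (2 gamma, gamma_c) <= (2 gamma + 2 gamma_c) / 3, the case
   gamma_c = 1 being settled by gamma_t <= 2 = ceil (4 / 3).  Complete graphs
   attain the bound: gamma = gamma_c = 1 and gamma_t = 2. *)
From mathcomp Require Import all_boot.
From mathcomp Require Import zify.
Set Implicit Arguments. Unset Strict Implicit. Unset Printing Implicit Defensive.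

Section MinCard.
Variable T : finType.
Implicit Types (P : pred {set T}) (S : {set T}).

Lemma min_card_leq P S : P S -> min_card P <= #|S|.
Proof.
move=> PS; rewrite /min_card -big_filter.
have : S \in [seq S' <- index_enum {set T} | P S'].
  by rewrite mem_filter PS mem_index_enum.
elim: [seq _ <- _ | _] => // S' s IHs; rewrite big_cons inE.
by case/orP => [/eqP <-|/IHs le_s]; rewrite geq_min ?leqnn ?le_s ?orbT.
Qed.

Lemma min_card_geq P k :
  (forall S, P S -> k <= #|S|) -> k <= #|T| -> k <= min_card P.
Proof.
move=> le_kP le_kT; rewrite /min_card.
by elim/big_ind: _ => // m n le_km le_kn; rewrite leq_min le_km le_kn.
Qed.

Lemma min_card_eq P S :
  P S -> (forall S', P S' -> #|S| <= #|S'|) -> min_card P = #|S|.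
Proof.
move=> PS minS; apply/eqP; rewrite eqn_leq min_card_leq //=.
by rewrite min_card_geq ?max_card.
Qed.

Lemma min_card_attained P S : P S -> exists2 S', P S' & #|S'| = min_card P.
Proof.
move=> PS; case: (arg_minnP (fun S' : {set T} => #|S'|) PS) => S' PS' minS'.
by exists S'; rewrite // (min_card_eq PS' minS').
Qed.

End MinCard.

Section Domination.
Variables (T : finType) (e : rel T).

Lemma dominating_setT : dominating e setT.
Proof. by apply/forallP => x; rewrite in_setT. Qed.

Lemma connected_dominating_setT :
  (forall x y, connect e x y) -> connected_dominating e setT.
Proof.
move=> conn_e; rewrite /connected_dominating dominating_setT /=.
apply/forall_inP => x _; apply/forall_inP => y _.
by rewrite (@eq_connect _ _ e) // => u v /=; rewrite !in_setT !andbT.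
Qed.

Lemma gamma_leq_gamma_c : connected_graph e -> gamma e <= gamma_c e.
Proof.
rewrite /gamma_c; case=> _ /connected_dominating_setT /min_card_attained.
by case=> C /andP [domC _] <-; apply: min_card_leq.
Qed.

Hypothesis e_sym : symmetric e.

Lemma total_dominating_setU_neighbours (D : {set T}) (f : T -> T) :
  (forall x, e x (f x)) -> dominating e D -> total_dominating e (D :|: f @: D).
Proof.
move=> ef domD; apply/forallP => x; case: (boolP (x \in D)) => xD.
  by apply/existsP; exists (f x); rewrite !inE imset_f ?orbT //= e_sym ef.
move/forallP/(_ x): domD; rewrite (negbTE xD) => /exists_inP [y yD eyx].
by apply/exists_inP; exists y; rewrite ?inE ?yD.
Qed.

Lemma connected_dominating_total (C : {set T}) :
  1 < #|C| -> connected_dominating e C -> total_dominating e C.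
Proof.
move=> C_gt1 /andP [domC connC]; apply/forallP => x.
case: (boolP (x \in C)) => xC; last first.
  by move/forallP/(_ x): domC; rewrite (negbTE xC).
have [z zC zx] : exists2 z, z \in C & z != x.
  case/card_gt1P: C_gt1 => a [b [aC bC ab]].
  by case: (eqVneq a x) => [<-|ax]; [exists b; rewrite // eq_sym | exists a].
move/forall_inP/(_ x xC)/forall_inP/(_ z zC): connC.
case/connectP => [[|u p]] /=; first by move=> _ zx'; rewrite zx' eqxx in zx.
by case/andP => /and3P [exu _ uC] _ _; apply/exists_inP; exists u; rewrite // e_sym.
Qed.

Lemma gamma_t_leq_double_gamma : no_isolated e -> gamma_t e <= 2 * gamma e.
Proof.
move=> no_iso; rewrite /gamma; have [D domD <-] := min_card_attained dominating_setT.
have tdom := total_dominating_setU_neighbours (fun x => xchooseP (no_iso x)) domD.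
apply: leq_trans (min_card_leq tdom) _.
by rewrite mul2n -addnn (leq_trans (leq_card_setU _ _)) ?leq_add2l ?leq_imset_card.
Qed.

Lemma gamma_t_leq_gamma_c :
  connected_graph e -> 1 < gamma_c e -> gamma_t e <= gamma_c e.
Proof.
rewrite /gamma_c; case=> _ /connected_dominating_setT /min_card_attained.
case=> C cdomC <- C_gt1.
exact/min_card_leq/connected_dominating_total.
Qed.

End Domination.

Lemma ceil_div_two_thirds_bound (t g c : nat) :
  t <= 2 * g -> g <= c -> (1 < c -> t <= c) -> t <= ceil_div (2 * (g + c)) 3.
Proof. by rewrite /ceil_div /=; case: (leqP 2 c) => c2 le_tg le_gc le_tc; lia. Qed.

Section CompleteGraph.
Variable T : finType.
Hypothesis T_gt1 : 1 < #|T|.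

Definition complete_rel : rel T := fun x y => x != y.

Lemma complete_simple : simple_graph complete_rel.
Proof. by split=> [x y | x]; rewrite /complete_rel; [rewrite eq_sym | rewrite eqxx]. Qed.

Lemma complete_connected : connected_graph complete_rel.
Proof.
split=> [|x y]; first exact: ltnW.
by case: (eqVneq x y) => [->|xy]; [exact: connect0 | exact: connect1].
Qed.

Lemma complete_no_isolated : no_isolated complete_rel.
Proof.
move=> x; case/card_gt1P: T_gt1 => a [b [_ _ ab]].
by case: (eqVneq a x) => [<-|ax]; [exists b | exists a; rewrite /complete_rel eq_sym].
Qed.

Lemma complete_dominating1 (a : T) : dominating complete_rel [set a].
Proof.
apply/forallP => x; rewrite inE; case: (eqVneq x a) => //= xa.
by apply/exists_inP; exists a; rewrite ?inE // /complete_rel eq_sym.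
Qed.

Lemma complete_gamma : gamma complete_rel = 1.
Proof.
case/card_gt1P: T_gt1 => a _.
rewrite /gamma (min_card_eq (complete_dominating1 a)) ?cards1 // => S.
case/forallP/(_ a)/orP => [aS|/exists_inP [y yS _]]; apply/card_gt0P; by eauto.
Qed.

Lemma complete_gamma_c : gamma_c complete_rel = 1.
Proof.
apply/eqP; rewrite eqn_leq -{2}complete_gamma.
case/card_gt1P: T_gt1 => a _.
rewrite (gamma_leq_gamma_c complete_connected) andbT.
apply: leq_trans (min_card_leq (_ : connected_dominating _ [set a])) _.
  rewrite /connected_dominating complete_dominating1.
  by apply/forall_inP => x /set1P ->; apply/forall_inP => y /set1P ->.
by rewrite cards1.
Qed.

Lemma complete_gamma_t : gamma_t complete_rel = 2.
Proof.
case/card_gt1P: T_gt1 => a [b [_ _ ab]].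
have tdom_ab : total_dominating complete_rel [set a; b].
  apply/forallP => x; case: (eqVneq x a) => [->|xa]; apply/exists_inP.
    by exists b; rewrite ?inE ?eqxx ?orbT // /complete_rel eq_sym.
  by exists a; rewrite ?inE ?eqxx // /complete_rel eq_sym.
rewrite /gamma_t (min_card_eq tdom_ab) ?cards2 ?ab // => S /forallP tdomS.
have [y yS _] := exists_inP (tdomS a); have [z zS zy] := exists_inP (tdomS y).
by apply/card_gt1P; exists z, y.
Qed.

End CompleteGraph.

Theorem theorem2p3 :
  (forall (T : finType) (e : rel T),
      simple_graph e -> connected_graph e -> no_isolated e ->
      gamma_t e <= ceil_div (2 * (gamma e + gamma_c e)) 3)
  /\
  (forall n : nat, exists (T : finType) (e : rel T),
      [/\ simple_graph e, connected_graph e, no_isolated e, n <= #|T| &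
          gamma_t e = ceil_div (2 * (gamma e + gamma_c e)) 3]).
Proof.
split=> [T e [e_sym _] conn_e no_iso | n].
  apply: ceil_div_two_thirds_bound.
  - exact: gamma_t_leq_double_gamma.
  - exact: gamma_leq_gamma_c.
  - exact: gamma_t_leq_gamma_c.
have T_gt1 : 1 < #|'I_n.+2| by rewrite card_ord.
exists 'I_n.+2, (@complete_rel _); split.
- exact: complete_simple.
- exact: complete_connected.
- exact: complete_no_isolated.
- by rewrite card_ord leqW.
- by rewrite (complete_gamma T_gt1) (complete_gamma_c T_gt1) (complete_gamma_t T_gt1).
Qed.
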